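(* Let $R>0$ and let $f\colon\mathbb{R}\to(0,\infty)$ be a continuously differentiable convex function. Put $\alpha(t)=\dfrac{tf'(t)-f(t)}{\sqrt{1+f'(t)^2}}$ and $C^+=\{t>0\mid\alpha(t)\ge R\}$. If $t_0\in C^+$, then $\alpha(t)\ge\alpha(t_0)$ for every $t>t_0$; in particular $t\in C^+$ for every $t>t_0$. *)

From Stdlib Require Import Reals.
From Coquelicot Require Import Coquelicot.
Open Scope R_scope.

Definition is_C1 (f : R -> R) : Prop :=
  (forall x, ex_derive f x) /\ (forall x, continuous (Derive f) x).

Definition convex_fun (f : R -> R) : Prop :=
  forall x y l, 0 <= l <= 1 -> f (l * x + (1 - l) * y) <= l * f x + (1 - l) * f y.

Definition alpha (f : R -> R) (t : R) : R :=
  (t * Derive f t - f t) / sqrt (1 + (Derive f t) ^ 2).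

Definition Cplus_set (Rad : R) (f : R -> R) (t : R) : Prop :=
  0 < t /\ alpha f t >= Rad.

From Stdlib Require Import Reals Lra.
From Coquelicot Require Import Coquelicot.
Open Scope R_scope.

(* [alpha f t] is the signed distance from the origin to the tangent line of
   the graph of [f] at [t] (positive when the origin lies above it).  For [t > t0], convexity keeps the point
   [(t0, f t0)] above the tangent at [t], so [alpha f t] is at least the
   signed distance to the line of slope [f' t] through [(t0, f t0)]; and as
   [f' t >= f' t0 > 0], rotating that line from slope [f' t0] to [f' t]
   about [(t0, f t0)] only moves it away from the origin. *)

Lemma derive_le_of_right_quotient_le (g : R -> R) (l M : R) :
  is_derive g 0 l -> (forall h, 0 < h <= 1 -> g h - g 0 <= h * M) -> l <= M.
Proof.
  intros Hd Hquot.
  apply is_derive_Reals in Hd.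
  apply Rnot_lt_le; intro HMl.
  destruct (Hd (l - M)) as [[delta Hdelta] Hdel]; [lra|]; simpl in Hdel.
  set (h := Rmin 1 (delta / 2)).
  assert (Hh1 : h <= 1) by apply Rmin_l.
  assert (Hhd : h <= delta / 2) by apply Rmin_r.
  assert (Hh0 : 0 < h) by (apply Rmin_pos; lra).
  assert (Hq : - (l - M) < (g (0 + h) - g 0) / h - l).
  { apply Rabs_def2, Hdel; [lra|rewrite Rabs_right; lra]. }
  rewrite Rplus_0_l in Hq.
  assert (Hle : (g h - g 0) / h <= M).
  { apply Rmult_le_reg_r with h; [lra|].
    replace ((g h - g 0) / h * h) with (g h - g 0) by (field; lra).
    rewrite Rmult_comm; apply Hquot; lra. }
  lra.
Qed.

Lemma convex_tangent_le (f : R -> R) (x y l : R) :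
  convex_fun f -> is_derive f x l -> f x + l * (y - x) <= f y.
Proof.
  intros hconv Hd.
  set (g := fun h => f (x + h * (y - x))).
  assert (Hg : is_derive g 0 ((y - x) * l)).
  { apply (is_derive_comp f (fun h => x + h * (y - x))).
    - now rewrite Rmult_0_l, Rplus_0_r.
    - auto_derive; [easy|ring]. }
  enough ((y - x) * l <= f y - f x) by lra.
  apply (derive_le_of_right_quotient_le g); [exact Hg|].
  intros h Hh; unfold g.
  rewrite Rmult_0_l, Rplus_0_r.
  pose proof (hconv y x h ltac:(lra)) as Hc.
  replace (h * y + (1 - h) * x) with (x + h * (y - x)) in Hc by ring.
  lra.
Qed.

Lemma convex_derive_le (f : R -> R) (x y l m : R) :
  convex_fun f -> is_derive f x l -> is_derive f y m -> x < y -> l <= m.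
Proof.
  intros hconv Hx Hy Hxy.
  pose proof (convex_tangent_le f x y l hconv Hx).
  pose proof (convex_tangent_le f y x m hconv Hy).
  nra.
Qed.

(* Signed distance from the origin to the line of slope [s] through [(a, b)]. *)
Definition line_dist (a b s : R) : R := (a * s - b) / sqrt (1 + s ^ 2).

Lemma alpha_line_dist (f : R -> R) (t : R) :
  alpha f t = line_dist t (f t) (Derive f t).
Proof. reflexivity. Qed.

Lemma sqrt_1_plus_sqr_pos (s : R) : 0 < sqrt (1 + s ^ 2).
Proof. apply sqrt_lt_R0; nra. Qed.

Lemma numerator_pos_of_line_dist_pos (a b s : R) : 0 < line_dist a b s -> 0 < a * s - b.
Proof.
  intro H.
  pose proof (sqrt_1_plus_sqr_pos s) as Hs.
  replace (a * s - b) with (line_dist a b s * sqrt (1 + s ^ 2))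
    by (unfold line_dist; field; lra).
  now apply Rmult_lt_0_compat.
Qed.

Lemma line_dist_le_intercept (a b a' b' s : R) :
  a * s - b <= a' * s - b' -> line_dist a b s <= line_dist a' b' s.
Proof.
  intro H; unfold line_dist, Rdiv.
  apply Rmult_le_compat_r; [|exact H].
  left; apply Rinv_0_lt_compat, sqrt_1_plus_sqr_pos.
Qed.

Lemma line_dist_le_slope (a b q p : R) :
  0 <= a -> 0 <= b -> 0 <= q <= p -> 0 <= a * q - b ->
  line_dist a b q <= line_dist a b p.
Proof.
  intros Ha Hb Hqp Hq; unfold line_dist.
  pose proof (sqrt_1_plus_sqr_pos q) as Sq.
  pose proof (sqrt_1_plus_sqr_pos p) as Sp.
  set (u := a * q - b) in *; set (v := a * p - b).
  assert (Huv : u <= v) by (unfold u, v; nra).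
  assert (Hsq : (u * sqrt (1 + p ^ 2))² <= (v * sqrt (1 + q ^ 2))²).
  { rewrite !Rsqr_mult, !Rsqr_sqrt by nra.
    replace (v² * (1 + q ^ 2)) with
      (u² * (1 + p ^ 2) + (p - q) * (v * (a + b * q) + u * (a + b * p)))
      by (unfold u, v, Rsqr; ring).
    assert (0 <= v * (a + b * q) + u * (a + b * p))
      by (apply Rplus_le_le_0_compat; apply Rmult_le_pos; nra).
    nra. }
  apply Rsqr_incr_0_var in Hsq; [|nra].
  apply Rmult_le_reg_r with (sqrt (1 + q ^ 2) * sqrt (1 + p ^ 2)); [nra|].
  replace (u / sqrt (1 + q ^ 2) * (sqrt (1 + q ^ 2) * sqrt (1 + p ^ 2)))
    with (u * sqrt (1 + p ^ 2)) by (field; lra).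
  replace (v / sqrt (1 + p ^ 2) * (sqrt (1 + q ^ 2) * sqrt (1 + p ^ 2)))
    with (v * sqrt (1 + q ^ 2)) by (field; lra).
  exact Hsq.
Qed.

Theorem lemma3 (Rad : R) (f : R -> R)
  (hR : 0 < Rad) (hpos : forall x, 0 < f x) (hC1 : is_C1 f) (hconv : convex_fun f)
  (t0 : R) (ht0 : Cplus_set Rad f t0) :
  forall t, t > t0 -> alpha f t >= alpha f t0 /\ Cplus_set Rad f t.
Proof.
  intros t Ht.
  destruct hC1 as [hdf _], ht0 as [Ht0 HR0].
  assert (D : forall z, is_derive f z (Derive f z))
    by (intro z; apply Derive_correct, hdf).
  set (p := Derive f t); set (q := Derive f t0).
  assert (Hqp : q <= p) by (apply (convex_derive_le f t0 t); auto; lra).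
  assert (Hint : t0 * p - f t0 <= t * p - f t).
  { pose proof (convex_tangent_le f t t0 p hconv (D t)); lra. }
  assert (Hnum : 0 < t0 * q - f t0) by (apply numerator_pos_of_line_dist_pos; change (0 < alpha f t0); lra).
  assert (Hq : 0 < q) by (pose proof (hpos t0); nra).
  assert (Hmono : alpha f t0 <= alpha f t).
  { rewrite !alpha_line_dist; fold p q.
    apply Rle_trans with (line_dist t0 (f t0) p).
    - apply line_dist_le_slope; try lra; apply Rlt_le, hpos.
    - now apply line_dist_le_intercept. }
  repeat split; lra.
Qed.
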